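(* Let $G$ be a countable discrete amenable group, $l:G\to[0,\infty)$ a proper length function, and $\sigma\in Z^2(G,\mathbb{T})$. Let $L=L_{\partial_l\times\partial_l}$ be the Lipschitz seminorm on $C^*_r(G,\sigma)\otimes_{\min}C^*_r(G,\sigma)^{\mathrm{op}}$ of the exterior product of the odd spectral triples $(C^*_r(G,\sigma),\ell^2(G),\partial_l)$ and $(C^*_r(G,\sigma)^{\mathrm{op}},\ell^2(G),\partial_l)$. Then for all $\phi_1,\phi_2,\phi_3,\phi_4\in P_1(G)$, $$\Delta^{\min}_{\tau_\sigma,L}(M_{\phi_1}\circ M_{\phi_2},M_{\phi_3}\circ M_{\phi_4})\le\Delta^{\min}_{\tau_\sigma,L}(M_{\phi_1},M_{\phi_3})+\Delta^{\min}_{\tau_\sigma,L}(M_{\phi_2},M_{\phi_4}).$$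
   Context: $Z^2(G,\mathbb{T})$ is the set of normalized 2-cocycles. $C_c(G,\sigma)$ is the $*$-algebra of finitely supported functions with twisted convolution $(f_1*_\sigma f_2)(x)=\sum_y f_1(y)f_2(y^{-1}x)\sigma(y,y^{-1}x)$ and involution $f^*(x)=\overline{\sigma(x,x^{-1})}\,\overline{f(x^{-1})}$. $\lambda^\sigma(f)\xi(x)=\sum_y f(y)\xi(y^{-1}x)\sigma(y,y^{-1}x)$ on $\ell^2(G)$, $\lambda^\sigma_g=\lambda^\sigma(\delta_g)$, and $C^*_r(G,\sigma)$ is the norm closure of $\lambda^\sigma(C_c(G,\sigma))$; $\tau_\sigma$ is the faithful tracial state with $\tau_\sigma(\lambda^\sigma(f))=f(1_G)$ (it is amenable since $G$ is amenable). $B^{\mathrm{op}}$ is the opposite $C^*$-algebra (same Banach space and involution, product $b^{\mathrm{op}}c^{\mathrm{op}}=(cb)^{\mathrm{op}}$); $C^*_r(G,\sigma)^{\mathrm{op}}$ is faithfully represented on $\ell^2(G)$ via $\lambda^\sigma(f)^{\mathrm{op}}\mapsto\rho^\sigma(f)$, where $\rho^\sigma(f)\xi(x)=\sum_y\xi(y)f(y^{-1}x)\sigma(y,y^{-1}x)$. A length function $l$ satisfies $l(1_G)=0$, $l(s^{-1})=l(s)$, $l(st)\le l(s)+l(t)$; it is proper if $l^{-1}([0,r])$ is finite for all $r$. $\partial_l$ is the closure of $\delta_s\mapsto l(s)\delta_s$ on $C_c(G)$. The exterior product spectral triple has Hilbert space $(\ell^2(G)\otimes\ell^2(G))^{\oplus2}$,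 with $C^*_r(G,\sigma)\otimes_{\min}C^*_r(G,\sigma)^{\mathrm{op}}$ acting diagonally through $\lambda^\sigma\otimes\rho^\sigma$, and operator $\partial_l\times\partial_l$ the closure of $\begin{pmatrix}0&\partial_l\otimes1+i\,1\otimes\partial_l\\ \partial_l\otimes1-i\,1\otimes\partial_l&0\end{pmatrix}$; $L(x)=\|[\partial_l\times\partial_l,x]\|$ for $x$ in the algebraic tensor product $\lambda^\sigma(C_c(G,\sigma))\odot\lambda^\sigma(C_c(G,\sigma))^{\mathrm{op}}$, and $L(x)=\infty$ otherwise. $P_1(G)$ is the set of positive definite functions $\phi$ on $G$ with $\phi(1_G)=1$; for such $\phi$, $M_\phi$ is the unital completely positive map on $C^*_r(G,\sigma)$ with $M_\phi(\lambda^\sigma_g)=\phi(g)\lambda^\sigma_g$. For a trace $\tau$ on unital $B$ and completely positive $F:A\to B$, $\omega^{\min}_\tau(F)$ is the continuous extension to $A\otimes_{\min}B^{\mathrm{op}}$ of $a\otimes b^{\mathrm{op}}\mapsto\tau(F(a)b)$ (existing for amenable $\tau$). For a seminorm $L$, $\mathrm{mk}_L(\varphi,\psi)=\sup\{|\varphi(x)-\psi(x)|:L(x)\le1\}$, and $\Delta^{\min}_{\tau,L}(F,G)=\mathrm{mk}_L(\omega^{\min}_\tau(F),\omega^{\min}_\tau(G))$ for trace channels $F,G$ (completely positive with $\tau(F(1))=1$). *)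

From HB Require Import structures.
From mathcomp Require Import all_boot all_order all_algebra.
From mathcomp Require Import all_classical all_reals ereal.
From mathcomp Require Import complex.
Set Implicit Arguments.
Unset Strict Implicit.
Unset Printing Implicit Defensive.
Import Order.TTheory GRing.Theory Num.Theory.
Local Open Scope classical_set_scope.
Local Open Scope ring_scope.

Section TwistedGroupAlgebra.
Variable R : realType.
Variable G : groupType.
Local Notation C := (R[i]).

Definition cabs (z : C) : R := complex.Re `|z|.

Definition countable_group : Prop := exists f : G -> nat, injective f.

Definition bounded_fun (f : G -> R) : Prop := exists M : R, forall x, `|f x| <= M.

Definition amenable_group : Prop :=
  exists m : (G -> R) -> R,
    [/\ (forall f g, bounded_fun f -> bounded_fun g -> m (f \+ g) = m f + m g),
        (forall (a : R) f, bounded_fun f -> m (fun x => a * f x) = a * m f),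
        (forall f, bounded_fun f -> (forall x, 0 <= f x) -> 0 <= m f),
        m (fun _ => 1) = 1 &
        (forall f (s : G), bounded_fun f -> m (fun x => f (s^-1 * x)%g) = m f)].

Definition length_function (l : G -> R) : Prop :=
  [/\ (forall s, 0 <= l s), l 1%g = 0,
      (forall s, l (s^-1)%g = l s) &
      (forall s t, l (s * t)%g <= l s + l t)].

Definition proper_length (l : G -> R) : Prop :=
  forall r : R, finite_set [set s | l s <= r].

Definition normalized_2cocycle (sigma : G -> G -> C) : Prop :=
  [/\ (forall x y, cabs (sigma x y) = 1),
      (forall x y z, sigma x y * sigma (x * y)%g z = sigma x (y * z)%g * sigma y z),
      (forall x, sigma 1%g x = 1) &
      (forall x, sigma x 1%g = 1)].

Definition positive_definite (phi : G -> C) : Prop :=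
  forall (n : nat) (x : 'I_n -> G) (c : 'I_n -> C),
    0 <= \sum_(i < n) \sum_(j < n) (c i)^* * c j * phi ((x i)^-1 * x j)%g.

Definition P1 (phi : G -> C) : Prop := positive_definite phi /\ phi 1%g = 1.

Definition fin_supp (T : Type) (f : T -> C) : Prop := finite_set [set x | f x != 0].

Variable sigma : G -> G -> C.

Definition tconv (f1 f2 : G -> C) : G -> C :=
  fun x => \sum_(y \in [set: G]) f1 y * f2 (y^-1 * x)%g * sigma y (y^-1 * x)%g.

(* tau_sigma (lambda^sigma(f)) = f(1) *)
Definition tau (f : G -> C) : C := f 1%g.

(* M_phi on lambda^sigma(C_c(G,sigma)) : lambda(f) |-> lambda(phi f) *)
Definition Mphi (phi : G -> C) (f : G -> C) : G -> C := fun g => phi g * f g.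

(* finitely supported vectors of l^2(G) (x) l^2(G) = l^2(G x G) *)
Definition vec := (G * G)%type -> C.

(* lambda^sigma(f) (x) 1 *)
Definition lam1 (f : G -> C) (xi : vec) : vec :=
  fun p => \sum_(y \in [set: G]) f y * xi ((y^-1 * p.1)%g, p.2) * sigma y (y^-1 * p.1)%g.

(* 1 (x) rho^sigma(g) *)
Definition rho2 (g : G -> C) (xi : vec) : vec :=
  fun p => \sum_(y \in [set: G]) xi (p.1, y) * g (y^-1 * p.2)%g * sigma y (y^-1 * p.2)%g.

(* an element of the algebraic tensor product
   lambda(C_c(G,sigma)) (.) lambda(C_c(G,sigma))^op, represented as
   sum_k lambda(f_k) (x) lambda(g_k)^op *)
Definition tens := seq ((G -> C) * (G -> C)).

Fixpoint tens_fin (x : tens) : Prop :=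
  match x with
  | [::] => True
  | fg :: x' => (fin_supp fg.1 /\ fin_supp fg.2) /\ tens_fin x'
  end.

(* action of x on l^2(G x G) through lambda^sigma (x) rho^sigma *)
Definition act (x : tens) (xi : vec) : vec :=
  fun p => \sum_(fg <- x) lam1 fg.1 (rho2 fg.2 xi) p.

(* vectors of (l^2(G) (x) l^2(G))^{(+)2} *)
Definition vec2 := (vec * vec)%type.

Definition act2 (x : tens) (v : vec2) : vec2 := (act x v.1, act x v.2).

Variable l : G -> R.

(* partial_l (x) 1 + i 1 (x) partial_l  and  partial_l (x) 1 - i 1 (x) partial_l *)
Definition Dplus (xi : vec) : vec := fun p => ((l p.1)%:C + 'i * (l p.2)%:C)%C * xi p.
Definition Dminus (xi : vec) : vec := fun p => ((l p.1)%:C - 'i * (l p.2)%:C)%C * xi p.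

(* the operator partial_l x partial_l on finitely supported vectors *)
Definition Dext (v : vec2) : vec2 := (Dplus v.2, Dminus v.1).

Definition commD (x : tens) (v : vec2) : vec2 :=
  ((Dext (act2 x v)).1 - (act2 x (Dext v)).1,
   (Dext (act2 x v)).2 - (act2 x (Dext v)).2).

Definition norm2 (v : vec2) : R :=
  Num.sqrt (\sum_(p \in [set: (G * G)%type]) (cabs (v.1 p) ^+ 2 + cabs (v.2 p) ^+ 2)).

Definition fin_vec2 (v : vec2) : Prop := fin_supp v.1 /\ fin_supp v.2.

(* Lipschitz seminorm L(x) = || [partial_l x partial_l, x] ||, computed on the
   core of finitely supported vectors; L = +oo outside the algebraic tensor
   product (i.e. such x are never in the unit ball of L). *)
Definition Lip (x : tens) : \bar R :=
  ereal_sup [set (norm2 (commD x v))%:E | v in [set v | fin_vec2 v /\ norm2 v <= 1]].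

(* omega^min_tau(F) evaluated on x = sum_k lambda(f_k) (x) lambda(g_k)^op *)
Definition omega (F : (G -> C) -> (G -> C)) (x : tens) : C :=
  \sum_(fg <- x) tau (tconv (F fg.1) fg.2).

(* Delta^min_{tau,L}(F, F') = mk_L(omega(F), omega(F')) *)
Definition Delta (F F' : (G -> C) -> (G -> C)) : \bar R :=
  ereal_sup [set (cabs (omega F x - omega F' x))%:E
            | x in [set x | tens_fin x /\ (Lip x <= 1%:E)%E]].

End TwistedGroupAlgebra.

From HB Require Import structures.
From mathcomp Require Import all_boot all_order all_algebra.
From mathcomp Require Import all_classical all_reals ereal.
From mathcomp Require Import complex.
From mathcomp Require Import ring lra finmap.
Set Implicit Arguments.
Unset Strict Implicit.
Unset Printing Implicit Defensive.
Import Order.TTheory GRing.Theory Num.Theory.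
Local Open Scope classical_set_scope.
Local Open Scope ring_scope.

(* [M_phi (x) id] does not increase the Lipschitz seminorm.  On the finitely
   many group elements that matter, the kernel [(a, b) |-> phi (a b^-1)] is
   positive semidefinite, hence a Gram kernel
   [phi (a b^-1) = sum_k al_k(a) be_k(b)] with [sum_k |al_k(a)|^2 <= 1] and
   [sum_k |be_k(b)|^2 <= 1].  This writes [[D, (M_phi (x) id) x] v] as
   [sum_k al_k . [D, x] (be_k v)], so Cauchy-Schwarz bounds its norm by that
   of [v].  As the [M_phi] commute and [omega (F o F') x = omega F ((F' (x) id) x)],
   the estimate is the triangle inequality through [omega (M_phi1 o M_phi4)]. *)

Lemma fsumr_neq0 (V : nmodType) (T : choiceType) (A : set T) (F : T -> V) :
  \sum_(t \in A) F t != 0 -> exists2 t, A t & F t != 0.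
Proof. exact: (@fsbigN1 _ _ _ unit _ A (fun _ => F) tt). Qed.

Lemma psd2_hermitian (C : numClosedFieldType) (a b b' d : C) :
  (forall c0 c1 : C,
     0 <= c0^* * c0 * a + c0^* * c1 * b + (c1^* * c0 * b' + c1^* * c1 * d)) ->
  b' = b^*.
Proof.
move=> psd.
pose Q c0 c1 := c0^* * c0 * a + c0^* * c1 * b + (c1^* * c0 * b' + c1^* * c1 * d).
have realQ c0 c1 : (Q c0 c1)^* = Q c0 c1 by apply/conj_Creal/ger0_real/psd.
have := realQ 1 0; have := realQ 0 1; have := realQ 1 1; have := realQ 1 'i.
rewrite /Q !rmorphD !rmorphM /= !conjCK conjCi !rmorph1 !rmorph0.
rewrite !(mul0r, mulr0, mul1r, mulr1, add0r, addr0, mulrN, mulNr, opprK).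
move=> e4 e3 ed ea; rewrite ed ea in e3 e4.
(* [Q 1 1] and [Q 1 'i] being real force [b + b'] and ['i (b - b')] to be real. *)
have : 2 * 'i * (b^* - b') =
    'i * ((a + b^* + (b'^* + d)) - (a + b + (b' + d)))
    - ((a - 'i * b^* + ('i * b'^* - 'i * 'i * d))
       - (a + 'i * b + (- ('i * b') - 'i * 'i * d))).
  by ring.
rewrite e3 e4 !subrr mulr0 subr0 => /eqP.
by rewrite !mulf_eq0 pnatr_eq0 (negbTE (neq0Ci C)) subr_eq0 => /eqP.
Qed.

Lemma psdmx_gram (C : numClosedFieldType) n (A : 'M[C]_n) :
  (forall i j, A j i = (A i j)^*) ->
  (forall c : 'I_n -> C, 0 <= \sum_i \sum_j (c i)^* * c j * A i j) ->
  exists W : 'M[C]_n, forall i j, A i j = \sum_k (W k i)^* * W k j.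
Proof.
move=> hermA psdA.
have /orthomx_spectralP eA : A \is normalmx.
  apply: hermitian_normalmx; apply/is_hermitianmxP; apply/matrixP => i j.
  by rewrite !mxE /= expr0 mul1r hermA.
set P := spectralmx A in eA; set d := spectral_diag A in eA.
have uP : P \is unitarymx := spectral_unitarymx A.
rewrite invmx_unitary // in eA.
have AE i j : A i j = \sum_k (P k i)^* * d 0 k * P k j.
  by rewrite {1}eA mxE; apply: eq_bigr => k _; rewrite mul_mx_diag !mxE.
have d_ge0 k : 0 <= d 0 k.
  have -> : d 0 k = (P *m A *m (P ^t*)%sesqui) k k.
    by rewrite eA !mulmxA (unitarymxP uP) mul1mx -mulmxA (unitarymxP uP) mulmx1 mxE eqxx.
  apply: le_trans (psdA (fun i => (P k i)^*)) _; rewrite le_eqVlt; apply/orP; left.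
  rewrite !mxE exchange_big; apply/eqP/eq_bigr => j _; rewrite !mxE mulr_suml.
  by apply: eq_bigr => i _; rewrite conjCK; ring.
exists (\matrix_(k, j) (sqrtC (d 0 k) * P k j)) => i j.
rewrite AE; apply: eq_bigr => k _; rewrite !mxE rmorphM /=.
have -> : (sqrtC (d 0 k))^* = sqrtC (d 0 k).
  by apply/conj_Creal/ger0_real; rewrite sqrtC_ge0.
rewrite -{1}(sqrtCK (d 0 k)) expr2; ring.
Qed.

Section ComplexModulus.
Variable R : realType.
Local Notation C := (R[i]).

Lemma cabsE (z : C) : `|z| = (cabs z)%:C%C.
Proof. by rewrite /cabs normc_def. Qed.

Lemma cabs_ge0 (z : C) : 0 <= cabs z.
Proof. by rewrite -ler0c -cabsE. Qed.

Lemma cabs0 : cabs (0 : C) = 0.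
Proof. by apply: (@complexI R); rewrite -cabsE normr0. Qed.

Lemma cabsM (a b : C) : cabs (a * b) = cabs a * cabs b.
Proof. by apply: (@complexI R); rewrite rmorphM /= -!cabsE normrM. Qed.

Lemma cabsD (a b : C) : cabs (a + b) <= cabs a + cabs b.
Proof. by rewrite -lecR rmorphD /= -!cabsE ler_normD. Qed.

Lemma cabs_sum n (F : 'I_n -> C) : cabs (\sum_i F i) <= \sum_i cabs (F i).
Proof.
rewrite -lecR -cabsE rmorph_sum; apply: le_trans (ler_norm_sum _ _ _) _.
by under eq_bigr do rewrite cabsE.
Qed.

Lemma cabs_real (r : R) : cabs r%:C%C = `|r|.
Proof. by rewrite /cabs normc_def /= expr0n addr0 sqrtr_sqr. Qed.

Lemma sqr_cabs (z : C) : ((cabs z) ^+ 2)%:C%C = z * z^*.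
Proof. by rewrite rmorphXn /= -cabsE normCK. Qed.

Lemma sqr_cabs_sum_mul_le n (a z : 'I_n -> C) :
  \sum_k cabs (a k) ^+ 2 <= 1 ->
  cabs (\sum_k a k * z k) ^+ 2 <= \sum_k cabs (z k) ^+ 2.
Proof.
move=> a_le1.
set S := \sum_k cabs (a k) * cabs (z k).
set A := \sum_k cabs (a k) ^+ 2; set B := \sum_k cabs (z k) ^+ 2.
have le_S : cabs (\sum_k a k * z k) <= S.
  by apply: le_trans (cabs_sum _) _; under eq_bigr do rewrite cabsM.
have : 0 <= \sum_k (S * cabs (a k) - cabs (z k)) ^+ 2.
  by apply: sumr_ge0 => k _; exact: sqr_ge0.
have -> : \sum_k (S * cabs (a k) - cabs (z k)) ^+ 2 = S ^+ 2 * A - 2 * S * S + B.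
  rewrite (eq_bigr (fun k => S ^+ 2 * cabs (a k) ^+ 2
      - 2 * S * (cabs (a k) * cabs (z k)) + cabs (z k) ^+ 2)); last by move=> k _; ring.
  by rewrite !big_split /= sumrN -!mulr_sumr.
have : S ^+ 2 * A <= S ^+ 2 by rewrite ler_piMr ?sqr_ge0.
have := cabs_ge0 (\sum_k a k * z k).
rewrite !expr2 => ? ? ?; nra.
Qed.

End ComplexModulus.

Section PositiveDefinite.
Variables (R : realType) (G : groupType).
Local Notation C := (R[i]).

Lemma positive_definite_conj (phi : G -> C) : positive_definite phi ->
  forall g h, phi (h^-1 * g)%g = (phi (g^-1 * h)%g)^*.
Proof.
move=> pd g h.
apply: (psd2_hermitian (a := phi (g^-1 * g)%g) (d := phi (h^-1 * h)%g)) => c0 c1.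
have := pd 2 (fun i => if val i == 0%N then g else h)
             (fun i => if val i == 0%N then c0 else c1).
by rewrite !big_ord_recl !big_ord0 /= !addr0.
Qed.

Lemma P1_factorization (phi : G -> C) (S : set G) : P1 phi -> finite_set S ->
  exists n (al be : 'I_n -> G -> C),
  [/\ forall a b, S a -> S b -> \sum_k al k a * be k b = phi (a * b^-1)%g,
      forall a, \sum_k cabs (al k a) ^+ 2 <= 1 &
      forall b, \sum_k cabs (be k b) ^+ 2 <= 1].
Proof.
move=> [pd phi1] finS; pose s := fset_set S; pose n := size s.
pose e (i : 'I_n) := nth 1%g s i.
pose A : 'M[C]_n := \matrix_(i, j) phi (e i * (e j)^-1)%g.
have [W AE] : exists W : 'M[C]_n, forall i j, A i j = \sum_k (W k i)^* * W k j.
  apply: psdmx_gram => [i j|c].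
    by rewrite !mxE; have := positive_definite_conj pd (e i)^-1 (e j)^-1; rewrite !invgK.
  apply: le_trans (pd n (fun i => (e i)^-1)%g c) _.
  by under [leRHS]eq_bigr do under eq_bigr do rewrite mxE -[e _]invgK.
pose ix a : option 'I_n := insub (index a s).
have ixP a : S a -> exists2 i, ix a = Some i & e i = a.
  move=> Sa; have sa : a \in s by rewrite in_fset_set //; exact: mem_set.
  rewrite /ix; case: insubP => [i _ ie|]; last by rewrite index_mem sa.
  by exists i => //; rewrite /e ie nth_index.
have W_unit i : \sum_k (W k i)^* * W k i = 1 by rewrite -AE mxE mulgV.
exists n, (fun k a => if ix a is Some i then (W k i)^* else 0),
          (fun k b => if ix b is Some j then W k j else 0).
split=> [a b Sa Sb|a|b].
- by have [i -> <-] := ixP a Sa; have [j -> <-] := ixP b Sb; rewrite -AE mxE.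
- case: (ix a) => [i|]; last by rewrite big1 ?ler01 // => k _; rewrite cabs0 expr0n.
  rewrite le_eqVlt -(inj_eq (@complexI R)) rmorph_sum /=.
  by under eq_bigr do rewrite sqr_cabs conjCK; rewrite W_unit eqxx.
- case: (ix b) => [j|]; last by rewrite big1 ?ler01 // => k _; rewrite cabs0 expr0n.
  rewrite le_eqVlt -(inj_eq (@complexI R)) rmorph_sum /=.
  by under eq_bigr do rewrite sqr_cabs mulrC; rewrite W_unit eqxx.
Qed.

End PositiveDefinite.

Section ExteriorProduct.
Variables (R : realType) (G : groupType) (sigma : G -> G -> R[i]) (l : G -> R).
Local Notation C := (R[i]).
Local Notation vec := (vec R G).
Local Notation vec2 := (vec2 R G).
Local Notation tens := (tens R G).
Local Notation lam1 := (lam1 sigma).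
Local Notation rho2 := (rho2 sigma).
Local Notation act := (act sigma).
Local Notation commD := (commD sigma l).

Definition smul (b : G -> C) (xi : vec) : vec := fun p => b p.1 * xi p.
Definition smul2 (b : G -> C) (v : vec2) : vec2 := (smul b v.1, smul b v.2).
Definition supp2 (v : vec2) : set (G * G) := [set p | v.1 p != 0 \/ v.2 p != 0].

Definition tens_mapl (F : (G -> C) -> G -> C) (x : tens) : tens :=
  map (fun fg => (F fg.1, fg.2)) x.

Fixpoint left_supp (x : tens) : set G :=
  if x is fg :: x' then [set y | fg.1 y != 0] `|` left_supp x' else set0.

Lemma fin_supp_mull (T : choiceType) (b f : T -> C) :
  fin_supp f -> fin_supp (fun t => b t * f t).
Proof. by apply: sub_finite_set => t /=; apply: contra => /eqP ->; rewrite mulr0. Qed.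

Lemma fin_supp_sub (T : choiceType) (f g : T -> C) :
  fin_supp f -> fin_supp g -> fin_supp (f - g).
Proof.
move=> ff fg; have := conj ff fg; rewrite -finite_setU; apply: sub_finite_set.
move=> t /=; rewrite subr_eq0; have [-> /negbTE|] := eqVneq (f t) 0; last by left.
by rewrite eq_sym => gt; right; rewrite gt.
Qed.

Lemma fin_supp_lam1 f xi : fin_supp f -> fin_supp xi -> fin_supp (lam1 f xi).
Proof.
move=> ff fxi; apply: sub_finite_set (finite_image2 (fun y q => ((y * q.1)%g, q.2)) ff fxi).
move=> p /= /fsumr_neq0 [y _ ne0]; exists y.
  by apply: contra ne0 => /eqP ->; rewrite !mul0r.
exists ((y^-1 * p.1)%g, p.2); last by rewrite /= mulVKg; case: p {ne0}.
by apply: contra ne0 => /= /eqP ->; rewrite mulr0 mul0r.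
Qed.

Lemma fin_supp_rho2 g xi : fin_supp g -> fin_supp xi -> fin_supp (rho2 g xi).
Proof.
move=> fg fxi; apply: sub_finite_set (finite_image2 (fun q z => (q.1, (q.2 * z)%g)) fxi fg).
move=> p /= /fsumr_neq0 [y _ ne0]; exists (p.1, y).
  by apply: contra ne0 => /= /eqP ->; rewrite !mul0r.
exists (y^-1 * p.2)%g; first by apply: contra ne0 => /eqP ->; rewrite mulr0 mul0r.
by rewrite /= mulVKg; case: p {ne0}.
Qed.

Lemma fin_supp_act x xi : tens_fin x -> fin_supp xi -> fin_supp (act x xi).
Proof.
move=> + fxi; elim: x => [_|fg x IH [[ff fg2] fx]].
  by apply: (@sub_finite_set _ _ set0) => // p; rewrite /= /act big_nil eqxx.
have := conj (fin_supp_lam1 ff (fin_supp_rho2 fg2 fxi)) (IH fx).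
rewrite -finite_setU; apply: sub_finite_set.
move=> p; rewrite /= /act big_cons.
have [-> | ne0 _] := eqVneq (lam1 fg.1 (rho2 fg.2 xi) p) 0; last by left.
by rewrite add0r; right.
Qed.

Lemma fin_vec2_commD x v : tens_fin x -> fin_vec2 v -> fin_vec2 (commD x v).
Proof.
move=> fx [fv1 fv2]; split; apply: fin_supp_sub.
- exact/fin_supp_mull/fin_supp_act.
- exact/fin_supp_act/fin_supp_mull.
- exact/fin_supp_mull/fin_supp_act.
- exact/fin_supp_act/fin_supp_mull.
Qed.

Lemma fin_vec2_smul2 b v : fin_vec2 v -> fin_vec2 (smul2 b v).
Proof. by move=> [fv1 fv2]; split; exact: fin_supp_mull. Qed.

Lemma left_supp_finite x : tens_fin x -> finite_set (left_supp x).
Proof.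
by elim: x => [|fg x IH] //= [[ff _] fx]; rewrite finite_setU; split; last exact: IH.
Qed.

Lemma tens_fin_mapl_Mphi x phi : tens_fin x -> tens_fin (tens_mapl (Mphi phi) x).
Proof.
elim: x => [|fg x IH] //= [[ff fg2] fx].
by split; [split; first exact: fin_supp_mull | exact: IH].
Qed.

Lemma rho2_smul g b xi : rho2 g (smul b xi) = smul b (rho2 g xi).
Proof.
by apply/funext => p; rewrite /rho2 /smul mulr_fsumr; apply: eq_fsbigr => y _; ring.
Qed.

Lemma lam1_fset f xi (Y : {fset G}) p : (forall y, y \notin Y -> f y = 0) ->
  lam1 f xi p = \sum_(y <- Y) f y * xi ((y^-1 * p.1)%g, p.2) * sigma y (y^-1 * p.1)%g.
Proof. by move=> fY; rewrite /lam1 (fsbigTE Y) // => y /fY ->; rewrite !mul0r. Qed.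

Lemma lam1_Mphi f phi n (al be : 'I_n -> G -> C) (Q : set G) eta :
  fin_supp f -> (forall q, eta q != 0 -> Q q.1) ->
  (forall y q, f y != 0 -> Q q -> \sum_k al k (y * q)%g * be k q = phi y) ->
  forall p, lam1 (Mphi phi f) eta p = \sum_k al k p.1 * lam1 f (smul (be k) eta) p.
Proof.
move=> ff etaQ factor p; pose Y := fset_set [set y | f y != 0].
have fY y : y \notin Y -> f y = 0.
  by rewrite in_fset_set // notin_setE /= => /negP; rewrite negbK => /eqP.
rewrite (@lam1_fset _ _ Y); last by move=> y /fY; rewrite /Mphi => ->; rewrite mulr0.
under [RHS]eq_bigr do rewrite (@lam1_fset _ _ _ _ fY) big_distrr.
rewrite exchange_big /=; apply: eq_bigr => y _; set q := (y^-1 * p.1)%g.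
have [z0 | nz] := eqVneq (f y * eta (q, p.2)) 0.
  rewrite big1 => [|k _]; last by rewrite /smul /= (mulrCA (f y)) z0 !(mulr0, mul0r).
  by rewrite /Mphi -[phi y * f y * _]mulrA z0 !(mulr0, mul0r).
have fy : f y != 0 by apply: contra nz => /eqP ->; rewrite mul0r.
have Qq : Q q by apply: (etaQ (q, p.2)); apply: contra nz => /eqP ->; rewrite mulr0.
rewrite /Mphi -(factor y q fy Qq) /q mulVKg !mulr_suml; apply: eq_bigr => k _.
by rewrite /smul /=; ring.
Qed.

Lemma act_mapl_Mphi x phi n (al be : 'I_n -> G -> C) (Q : set G) xi :
  tens_fin x -> (forall q, xi q != 0 -> Q q.1) ->
  (forall y q, left_supp x y -> Q q -> \sum_k al k (y * q)%g * be k q = phi y) ->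
  forall p, act (tens_mapl (Mphi phi) x) xi p = \sum_k al k p.1 * act x (smul (be k) xi) p.
Proof.
move=> + xiQ; elim: x => [_ _ p|fg x IH [[ff _] fx] factor p].
  by rewrite /act big_nil big1 // => k _; rewrite big_nil mulr0.
rewrite /act /= big_cons; under [RHS]eq_bigr do rewrite big_cons mulrDr.
rewrite big_split /=; congr (_ + _); last by apply: IH => // y q xy; apply: factor; right.
under [RHS]eq_bigr do rewrite rho2_smul.
apply: lam1_Mphi => // [q /fsumr_neq0 [s _ ne0]|y q fy]; last by apply: factor; left.
by apply: (xiQ (q.1, s)); apply: contra ne0 => /eqP ->; rewrite !mul0r.
Qed.

Lemma commDE x v p :
  (commD x v).1 p =
    ((l p.1)%:C + 'i * (l p.2)%:C)%C * act x v.2 p - act x (Dplus l v.2) p /\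
  (commD x v).2 p =
    ((l p.1)%:C - 'i * (l p.2)%:C)%C * act x v.1 p - act x (Dminus l v.1) p.
Proof. by []. Qed.

Lemma smul_Dplus b xi : smul b (Dplus l xi) = Dplus l (smul b xi).
Proof. by apply/funext => q; rewrite /smul /Dplus mulrCA. Qed.

Lemma smul_Dminus b xi : smul b (Dminus l xi) = Dminus l (smul b xi).
Proof. by apply/funext => q; rewrite /smul /Dminus mulrCA. Qed.

Lemma commD_mapl_Mphi x phi n (al be : 'I_n -> G -> C) (Q : set G) v :
  tens_fin x -> (forall q, supp2 v q -> Q q.1) ->
  (forall y q, left_supp x y -> Q q -> \sum_k al k (y * q)%g * be k q = phi y) ->
  forall p,
  (commD (tens_mapl (Mphi phi) x) v).1 p =
    \sum_k al k p.1 * (commD x (smul2 (be k) v)).1 p /\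
  (commD (tens_mapl (Mphi phi) x) v).2 p =
    \sum_k al k p.1 * (commD x (smul2 (be k) v)).2 p.
Proof.
move=> fx vQ factor p.
have v1Q q : v.1 q != 0 -> Q q.1 by move=> ne0; apply: vQ; left.
have v2Q q : v.2 q != 0 -> Q q.1 by move=> ne0; apply: vQ; right.
have Dv1Q q : Dminus l v.1 q != 0 -> Q q.1 by rewrite mulf_eq0 negb_or => /andP[_ /v1Q].
have Dv2Q q : Dplus l v.2 q != 0 -> Q q.1 by rewrite mulf_eq0 negb_or => /andP[_ /v2Q].
have [-> ->] := commDE (tens_mapl (Mphi phi) x) v p.
rewrite (act_mapl_Mphi fx v1Q factor) (act_mapl_Mphi fx v2Q factor).
rewrite (act_mapl_Mphi fx Dv1Q factor) (act_mapl_Mphi fx Dv2Q factor).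
rewrite !mulr_sumr -!sumrB; split; apply: eq_bigr => k _;
  have [e1 e2] := commDE x (smul2 (be k) v) p;
  rewrite ?e1 ?e2 /= -?smul_Dplus -?smul_Dminus; ring.
Qed.

(* [norm2 v = sqrt (sqnorm2 v)]; both are [0] (a junk value) unless [v] is
   finitely supported. *)
Definition sqnorm2 (v : vec2) : R :=
  \sum_(p \in [set: G * G]) (cabs (v.1 p) ^+ 2 + cabs (v.2 p) ^+ 2).

Lemma sqnorm2_ge0 v : 0 <= sqnorm2 v.
Proof. by apply: fsumr_ge0 => p _; rewrite addr_ge0 ?sqr_ge0. Qed.

Lemma sqnorm2_fset (P : {fset G * G}) v :
  (forall p, p \notin P -> v.1 p = 0 /\ v.2 p = 0) ->
  sqnorm2 v = \sum_(p <- P) (cabs (v.1 p) ^+ 2 + cabs (v.2 p) ^+ 2).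
Proof.
move=> vP; rewrite /sqnorm2 (fsbigTE P) // => p /vP [-> ->].
by rewrite cabs0 expr0n addr0.
Qed.

Lemma supp2_fset_set (S : set (G * G)) v : finite_set S -> supp2 v `<=` S ->
  forall p, p \notin fset_set S -> v.1 p = 0 /\ v.2 p = 0.
Proof.
move=> finS vS p; rewrite in_fset_set // notin_setE => /(contra_not (vS p)) /not_orP.
by case=> /negP/negbNE/eqP -> /negP/negbNE/eqP ->.
Qed.

Lemma fin_vec2_supp2 v : fin_vec2 v -> finite_set (supp2 v).
Proof. by move=> [fv1 fv2]; rewrite [supp2 v]/(_ `|` _) finite_setU. Qed.

Lemma sqnorm2_sum_mul_le n (al : 'I_n -> G -> C) (u : 'I_n -> vec2) w :
  (forall a, \sum_k cabs (al k a) ^+ 2 <= 1) -> (forall k, fin_vec2 (u k)) ->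
  (forall p, w.1 p = \sum_k al k p.1 * (u k).1 p /\ w.2 p = \sum_k al k p.1 * (u k).2 p) ->
  sqnorm2 w <= \sum_k sqnorm2 (u k).
Proof.
move=> al_le1 fu wE; pose S := \bigcup_(k in [set: 'I_n]) supp2 (u k).
have finS : finite_set S by apply: bigcup_finite => // k _; exact: fin_vec2_supp2.
have u0 k := supp2_fset_set finS (fun p ukp => ex_intro2 _ _ k I ukp).
have w0 p (pS : p \notin fset_set S) : w.1 p = 0 /\ w.2 p = 0.
  have [-> ->] := wE p; split; apply: big1 => k _;
  by have [e1 e2] := u0 k p pS; rewrite ?e1 ?e2 mulr0.
rewrite (sqnorm2_fset w0); under [leRHS]eq_bigr => k _ do rewrite (sqnorm2_fset (u0 k)).
rewrite exchange_big /=; apply: ler_sum => p _; have [-> ->] := wE p.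
by rewrite big_split /= lerD ?sqr_cabs_sum_mul_le.
Qed.

Lemma sum_sqnorm2_smul2_le n (be : 'I_n -> G -> C) v :
  (forall b, \sum_k cabs (be k b) ^+ 2 <= 1) -> fin_vec2 v ->
  \sum_k sqnorm2 (smul2 (be k) v) <= sqnorm2 v.
Proof.
move=> be_le1 /fin_vec2_supp2 finS; have v0 := supp2_fset_set finS (@subset_refl _ _).
have bv0 k p (pS : p \notin fset_set (supp2 v)) :
    (smul2 (be k) v).1 p = 0 /\ (smul2 (be k) v).2 p = 0.
  by have [v10 v20] := v0 p pS; rewrite /= /smul v10 v20 mulr0.
under eq_bigr do rewrite (sqnorm2_fset (bv0 _)).
rewrite (sqnorm2_fset v0) exchange_big /=; apply: ler_sum => p _.
under eq_bigr do rewrite /= /smul !cabsM !exprMn -mulrDr.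
by rewrite -mulr_suml ler_piMl ?addr_ge0 ?sqr_ge0.
Qed.

Definition scale2 (c : C) : vec2 -> vec2 := smul2 (fun=> c).

Lemma lam1_scale f c eta : lam1 f (smul (fun=> c) eta) = smul (fun=> c) (lam1 f eta).
Proof.
by apply/funext => p; rewrite /lam1 /smul mulr_fsumr; apply: eq_fsbigr => y _; ring.
Qed.

Lemma act_scale x c xi : act x (smul (fun=> c) xi) = smul (fun=> c) (act x xi).
Proof.
apply/funext => p; rewrite /act /smul big_distrr; apply: eq_bigr => fg _.
by rewrite rho2_smul lam1_scale.
Qed.

Lemma commD_scale x c v : commD x (scale2 c v) = scale2 c (commD x v).
Proof.
have e xi : act x (fun q => c * xi q) = fun q => c * act x xi q := act_scale x c xi.
apply: injective_projections; apply/funext => p;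
  rewrite /= !e -?smul_Dplus -?smul_Dminus !e /smul /Dplus /Dminus /= !fctE; ring.
Qed.

Lemma sqnorm2_scale c v : sqnorm2 (scale2 c v) = cabs c ^+ 2 * sqnorm2 v.
Proof.
rewrite /sqnorm2 mulr_fsumr; apply: eq_fsbigr => p _.
by rewrite /= /smul !cabsM !exprMn mulrDr.
Qed.

Lemma norm2_scale (r : R) v : 0 <= r -> norm2 (scale2 r%:C%C v) = r * norm2 v.
Proof.
move=> r_ge0; rewrite /norm2 -/(sqnorm2 _) -/(sqnorm2 v) sqnorm2_scale cabs_real.
by rewrite sqrtrM ?sqr_ge0 // sqrtr_sqr normr_id ger0_norm.
Qed.

(* [Lip] only sees the unit ball; homogeneity extends the bound to all vectors. *)
Lemma norm2_commD_le x w : (Lip sigma l x <= 1%:E)%E -> fin_vec2 w ->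
  norm2 (commD x w) <= norm2 w.
Proof.
move=> Lx fw; apply/ler_addgt0Pr => e e_gt0.
have c_gt0 : 0 < norm2 w + e by rewrite ltr_wpDl // sqrtr_ge0.
pose w' := scale2 (norm2 w + e)^-1%:C%C w.
have nw' : norm2 w' <= 1.
  by rewrite norm2_scale ?invr_ge0 ?(ltW c_gt0) // ler_pdivrMl // mulr1 lerDl ltW.
have : norm2 (commD x w') <= 1.
  rewrite -lee_fin; apply: le_trans Lx; apply: ereal_sup_ubound.
  by exists w' => //; split => //; exact: fin_vec2_smul2.
by rewrite commD_scale norm2_scale ?invr_ge0 ?(ltW c_gt0) // ler_pdivrMl // mulr1.
Qed.

Lemma sqnorm2_commD_mapl_Mphi x phi v : P1 phi -> tens_fin x -> fin_vec2 v ->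
  (forall w, fin_vec2 w -> sqnorm2 (commD x w) <= sqnorm2 w) ->
  sqnorm2 (commD (tens_mapl (Mphi phi) x) v) <= sqnorm2 v.
Proof.
move=> P1phi fx fv commD_le.
pose Q := fst @` supp2 v.
have finQ : finite_set Q by apply/finite_image/fin_vec2_supp2.
pose S := Q `|` [set (y * q)%g | y in left_supp x & q in Q].
have finS : finite_set S.
  by rewrite finite_setU; split => //; apply: finite_image2 => //; exact: left_supp_finite.
have [n [al [be [factorS al_le1 be_le1]]]] := P1_factorization P1phi finS.
have factor y q : left_supp x y -> Q q -> \sum_k al k (y * q)%g * be k q = phi y.
  by move=> xy Qq; rewrite factorS ?mulgK //; [right; exists y => //; exists q | left].
have vQ q : supp2 v q -> Q q.1 by exists q.
apply: le_trans (sqnorm2_sum_mul_le al_le1 _ (commD_mapl_Mphi fx vQ factor)) _.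
  by move=> k; apply: fin_vec2_commD => //; exact: fin_vec2_smul2.
apply: le_trans (sum_sqnorm2_smul2_le be_le1 fv); apply: ler_sum => k _.
by apply: commD_le; exact: fin_vec2_smul2.
Qed.

Lemma Lip_mapl_Mphi_le1 x phi : P1 phi -> tens_fin x -> (Lip sigma l x <= 1%:E)%E ->
  (Lip sigma l (tens_mapl (Mphi phi) x) <= 1%:E)%E.
Proof.
move=> P1phi fx Lx; apply: ge_ereal_sup => _ [v [fv nv] <-]; rewrite lee_fin.
apply: le_trans nv; rewrite /norm2 -!/(sqnorm2 _) ler_sqrt ?sqnorm2_ge0 //.
apply: sqnorm2_commD_mapl_Mphi => // w fw.
by rewrite -ler_sqrt ?sqnorm2_ge0 //; exact: norm2_commD_le.
Qed.

Definition preserves_Lip_ball (F : (G -> C) -> G -> C) :=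
  forall x, tens_fin x -> (Lip sigma l x <= 1%:E)%E ->
  tens_fin (tens_mapl F x) /\ (Lip sigma l (tens_mapl F x) <= 1%:E)%E.

Lemma Mphi_preserves_Lip_ball phi : P1 phi -> preserves_Lip_ball (Mphi phi).
Proof.
by move=> P1phi x fx Lx; split; [exact: tens_fin_mapl_Mphi | exact: Lip_mapl_Mphi_le1].
Qed.

Lemma omega_comp F F' x : omega sigma (F \o F') x = omega sigma F (tens_mapl F' x).
Proof. by rewrite /omega /tens_mapl big_map. Qed.

Lemma Mphi_comm (a b : G -> C) : Mphi a \o Mphi b = Mphi b \o Mphi a.
Proof. by apply/funext => f; apply/funext => g; rewrite /= /Mphi mulrCA. Qed.

Lemma Delta_comp_le (F1 F2 F3 F4 : (G -> C) -> G -> C) :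
  F1 \o F2 = F2 \o F1 -> F1 \o F4 = F4 \o F1 ->
  preserves_Lip_ball F1 -> preserves_Lip_ball F4 ->
  (Delta sigma l (F1 \o F2) (F3 \o F4)
     <= Delta sigma l F1 F3 + Delta sigma l F2 F4)%E.
Proof.
move=> F12 F14 ball1 ball4; apply: ge_ereal_sup => _ [x [fx Lx] <-].
have le_ab : ((cabs (omega sigma (F1 \o F2) x - omega sigma (F1 \o F4) x))%:E
              <= Delta sigma l F2 F4)%E.
  apply: ereal_sup_ubound; exists (tens_mapl F1 x); first exact: ball1.
  by rewrite F12 F14 (omega_comp F2) (omega_comp F4).
have le_bc : ((cabs (omega sigma (F1 \o F4) x - omega sigma (F3 \o F4) x))%:E
              <= Delta sigma l F1 F3)%E.
  apply: ereal_sup_ubound; exists (tens_mapl F4 x); first exact: ball4.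
  by rewrite (omega_comp F1) (omega_comp F3).
apply: le_trans (leeD le_bc le_ab); rewrite -EFinD lee_fin.
by have := cabsD (omega sigma (F1 \o F4) x - omega sigma (F3 \o F4) x)
  (omega sigma (F1 \o F2) x - omega sigma (F1 \o F4) x); rewrite addrC addrA subrK.
Qed.

End ExteriorProduct.

(* The hypotheses on [G], [l] and [sigma] only guarantee that the objects of
   the paper exist; on the algebraic core the estimate holds without them. *)
Theorem theorem6p9 (R : realType) (G : groupType) (l : G -> R)
    (sigma : G -> G -> R[i]) (phi1 phi2 phi3 phi4 : G -> R[i]) :
  countable_group G ->
  amenable_group R G ->
  length_function l -> proper_length l ->
  normalized_2cocycle sigma ->
  P1 phi1 -> P1 phi2 -> P1 phi3 -> P1 phi4 ->
  (Delta sigma l (Mphi phi1 \o Mphi phi2) (Mphi phi3 \o Mphi phi4)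
     <= Delta sigma l (Mphi phi1) (Mphi phi3) + Delta sigma l (Mphi phi2) (Mphi phi4))%E.
Proof.
move=> _ _ _ _ _ P1phi1 _ _ P1phi4.
apply: Delta_comp_le; [exact: Mphi_comm | exact: Mphi_comm
  | exact: Mphi_preserves_Lip_ball | exact: Mphi_preserves_Lip_ball].
Qed.
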